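(* Let $z_1,\dots,z_N$ be independent with $z_i\sim\mathrm{Bernoulli}(q_i)$, $0<q_i<1$ for every $i\in[N]$, and let $S=\sum_{i=1}^Nz_i$. If $\max_{i\in[N]}q_i<1-\frac1N$, then $\Pr\{S<N\max_{i\in[N]}q_i\}>\frac14$. *)

From mathcomp Require Import all_boot all_order all_algebra.
Set Implicit Arguments. Unset Strict Implicit. Unset Printing Implicit Defensive.
Import Order.TTheory GRing.Theory Num.Theory.
Local Open Scope ring_scope.

(* Joint law of independent Bernoulli(q i) variables z_1..z_N: the probability
   of an outcome b (b i = value of z_i) is the product of the marginals. *)
Definition bern_weight (R : numDomainType) (N : nat) (q : 'I_N -> R)
    (b : {ffun 'I_N -> bool}) : R :=
  \prod_(i < N) (if b i then q i else 1 - q i).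

Definition bern_prob (R : numDomainType) (N : nat) (q : 'I_N -> R)
    (A : pred {ffun 'I_N -> bool}) : R :=
  \sum_(b : {ffun 'I_N -> bool} | A b) bern_weight q b.

Definition bern_sum (N : nat) (b : {ffun 'I_N -> bool}) : nat :=
  \sum_(i < N) (b i : nat).

(* max_i q_i  (all q_i > 0 in the theorem, so the seed 0 is harmless) *)
Definition qmax (R : realDomainType) (N : nat) (q : 'I_N -> R) : R :=
  \big[Num.max/0]_(i < N) q i.

(* With p = max q_i, the event S < N p says that more than j = floor (N (1 - p))
   of the z_i vanish, and 1 <= j < N by the hypothesis on p.  Encode the law of
   the number of zeros by the product of the generating polynomials
   (q_i + (1 - q_i) X) and compare lower tails.  Lowering every Bernoulli
   parameter 1 - q_i to 1 - p, then to j / N, only increases P(zeros <= j).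
   P(Bin(n, j/n) <= j) is nonincreasing in n: passing from n to n + 1 is a
   chain of mean-preserving spreads of two factors, each of which lowers the
   mass below j + 1 because the coefficients of the remaining factors do not
   increase from j - 1 to j (a binomial-ratio bound).  At n = j + 1 the
   tail is 1 - (j/(j+1))^(j+1) <= 3/4, as (1 + 1/j)^(j+1) decreases from 4.  Equality at j = 1 is excluded because then j/N < 1 - p. *)

From mathcomp Require Import all_boot all_order all_algebra.
From mathcomp Require Import ring lra zify.
Set Implicit Arguments. Unset Strict Implicit. Unset Printing Implicit Defensive.
Import Order.TTheory GRing.Theory Num.Theory.

Lemma bernoulli_ineq_nat y m : y ^ m * (y + m) <= y * (y + 1) ^ m.
Proof.
elim: m => [|m IH]; first by rewrite !expn0 mul1n muln1 addn0.
rewrite !expnS; set Y := y ^ m in IH *; set Z := (y + 1) ^ m in IH *.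
nia.
Qed.

Lemma expn_succ_ratio_step n : 0 < n ->
  n.+2 ^ n.+2 * n ^ n.+1 <= n.+1 ^ n.+2 * n.+1 ^ n.+1.
Proof.
move=> n_gt0; have := bernoulli_ineq_nat (n * n.+2) n.+1.
have -> : n * n.+2 + 1 = n.+1 * n.+1 by lia.
rewrite !expnMn [n.+2 ^ n.+2]expnS [n.+1 ^ n.+2]expnS.
set A := n ^ n.+1; set B := n.+2 ^ n.+1; set C := n.+1 ^ n.+1 => bern.
have y_gt0 : 0 < n * n.+2 by rewrite muln_gt0 n_gt0.
have : n.+2 * (n * n.+2) <= n.+1 * (n * n.+2 + n.+1) by nia.
rewrite -(leq_pmul2l y_gt0); nia.
Qed.

Lemma expn_succ_ratio_le m n : 0 < m <= n ->
  n.+1 ^ n.+1 * m ^ m.+1 <= m.+1 ^ m.+1 * n ^ n.+1.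
Proof.
case/andP=> m_gt0; elim: n => [|n IH]; first by rewrite leqn0 => /eqP m0; rewrite m0 in m_gt0.
rewrite leq_eqVlt => /orP[/eqP->|]; first by rewrite mulnC.
rewrite ltnS => le_mn; have n_gt0 := leq_trans m_gt0 le_mn.
have step := expn_succ_ratio_step n_gt0; have := IH le_mn.
have pos : 0 < n ^ n.+1 by rewrite expn_gt0 n_gt0.
set A := n.+2 ^ n.+2 in step *; set B := n ^ n.+1 in step pos *.
set C := n.+1 ^ n.+2 in step *; set D := n.+1 ^ n.+1 in step *.
rewrite -(leq_pmul2r pos); nia.
Qed.

Local Open Scope ring_scope.

Section BernoulliPolynomials.
Variable R : realFieldType.
Implicit Types (A W : {poly R}) (a p r s : R).

(* The generating polynomial of Bernoulli(r); for the generating polynomial A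
   of a variable X, [mass_lt c A] is P(X < c). *)
Definition bern_poly r : {poly R} := (1 - r)%:P + r%:P * 'X.

Definition mass_lt (c : nat) A : R := \sum_(i < c) A`_i.

Definition coefs_ge0 A := forall i, 0 <= A`_i.

Lemma coef_mul_bern A r i :
  (A * bern_poly r)`_i = (1 - r) * A`_i + (if i is i'.+1 then r * A`_i' else 0).
Proof.
rewrite /bern_poly mulrDr coefD mulrA coefMX !coefMC.
by case: i => [|i] /=; rewrite ?mulr0 ?addr0 mulrC // [r * _]mulrC.
Qed.

Lemma mass_lt0 A : mass_lt 0 A = 0.
Proof. by rewrite /mass_lt big_ord0. Qed.

Lemma mass_ltS c A : mass_lt c.+1 A = mass_lt c A + A`_c.
Proof. by rewrite /mass_lt big_ord_recr. Qed.

Lemma mass_lt_mul_bern c A r :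
  mass_lt c.+1 (A * bern_poly r) = mass_lt c.+1 A - r * A`_c.
Proof.
elim: c => [|c IH]; first by rewrite !mass_ltS !mass_lt0 coef_mul_bern; ring.
by rewrite mass_ltS IH coef_mul_bern [mass_lt c.+2 A]mass_ltS; ring.
Qed.

Lemma mass_lt_sum (I : finType) c (P : I -> {poly R}) :
  mass_lt c (\sum_i P i) = \sum_i mass_lt c (P i).
Proof. by rewrite /mass_lt exchange_big; apply: eq_bigr => k _; rewrite coef_sum. Qed.

Lemma mass_lt_CXn c w e : mass_lt c (w%:P * 'X^e) = if (e < c)%N then w else 0.
Proof.
elim: c => [|c IH]; first by rewrite mass_lt0.
rewrite mass_ltS IH coefCM coefXn ltnS.
by case: (ltngtP e c); rewrite ?mulr1 ?mulr0 ?addr0 ?add0r.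
Qed.

Lemma bern_poly0 : bern_poly 0 = 1.
Proof. by rewrite /bern_poly subr0 mul0r addr0. Qed.

Lemma coefs_ge0_1 : coefs_ge0 1.
Proof. by move=> i; rewrite coef1; case: (i == 0%N). Qed.

Lemma coefs_ge0_mul_bern A r : coefs_ge0 A -> 0 <= r <= 1 -> coefs_ge0 (A * bern_poly r).
Proof.
move=> A_ge0 /andP[r_ge0 r_le1] i; rewrite coef_mul_bern.
have head_ge0 : 0 <= (1 - r) * A`_i by rewrite mulr_ge0 ?subr_ge0.
case: i head_ge0 => [|i] head_ge0; first by rewrite addr0.
by rewrite addr_ge0 // mulr_ge0.
Qed.

Lemma coefs_ge0_mul_prod_bern n (f : 'I_n -> R) A :
  coefs_ge0 A -> (forall i, 0 <= f i <= 1) ->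
  coefs_ge0 (A * \prod_(i < n) bern_poly (f i)).
Proof.
elim: n f A => [|n IH] f A A_ge0 f01; first by rewrite big_ord0 mulr1.
by rewrite big_ord_recl mulrA; apply: IH => //; apply: coefs_ge0_mul_bern.
Qed.

Lemma mass_lt_mul_bern_le c A r r' :
  coefs_ge0 A -> r <= r' -> mass_lt c (A * bern_poly r') <= mass_lt c (A * bern_poly r).
Proof.
move=> A_ge0 le_rr'; case: c => [|c]; first by rewrite !mass_lt0.
by rewrite !mass_lt_mul_bern lerD2l lerN2 ler_wpM2r.
Qed.

Lemma mass_lt_mul_bern_lt c A r r' :
  0 < A`_c -> r < r' -> mass_lt c.+1 (A * bern_poly r') < mass_lt c.+1 (A * bern_poly r).
Proof. by move=> Ac_gt0 lt_rr'; rewrite !mass_lt_mul_bern ltrD2l ltrN2 ltr_pM2r. Qed.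

Lemma mass_lt_mul_prod_bern_le n c (f f' : 'I_n -> R) A :
  coefs_ge0 A -> (forall i, 0 <= f' i <= f i) -> (forall i, f i <= 1) ->
  mass_lt c (A * \prod_(i < n) bern_poly (f i)) <=
  mass_lt c (A * \prod_(i < n) bern_poly (f' i)).
Proof.
elim: n f f' A => [|n IH] f f' A A_ge0 le_f'f f_le1; first by rewrite !big_ord0.
have f_01 i : 0 <= f i <= 1.
  by case/andP: (le_f'f i) => f'_ge0 /(le_trans f'_ge0)->; rewrite f_le1.
rewrite !big_ord_recr /= !mulrA.
apply: (@le_trans _ _ (mass_lt c (A * \prod_(i < n) bern_poly (f (widen_ord (leqnSn n) i))
                            * bern_poly (f' ord_max)))).
  apply: mass_lt_mul_bern_le; last by case/andP: (le_f'f ord_max).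
  by apply: coefs_ge0_mul_prod_bern => // i; apply: f_01.
rewrite -!mulrA ![_ * bern_poly (f' ord_max)]mulrC !mulrA.
apply: IH => [||i]; last exact: f_le1.
- apply: coefs_ge0_mul_bern => //.
  by case/andP: (le_f'f ord_max) => -> /le_trans; apply.
- by move=> i; apply: le_f'f.
Qed.

Lemma bern_polyX n r : bern_poly r ^+ n = \prod_(i < n) bern_poly r.
Proof. by rewrite prodr_const card_ord. Qed.

Lemma coef_bern_polyX_gt n i r : (n < i)%N -> (bern_poly r ^+ n)`_i = 0.
Proof.
elim: n i => [|n IH] [|i] // lt_ni; first by rewrite expr0 coef1.
by rewrite exprSr coef_mul_bern !IH ?mulr0 ?addr0 // ltnW.
Qed.

Lemma coef_bern_polyX_top n r : (bern_poly r ^+ n)`_n = r ^+ n.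
Proof.
elim: n => [|n IH]; first by rewrite expr0 coef1.
by rewrite exprSr coef_mul_bern IH coef_bern_polyX_gt // mulr0 add0r exprSr mulrC.
Qed.

Lemma coef_bern_polyX_gt0 n i r : 0 < r < 1 -> (i <= n)%N -> 0 < (bern_poly r ^+ n)`_i.
Proof.
move=> /andP[r_gt0 r_lt1]; have r'_gt0 : 0 < 1 - r by rewrite subr_gt0.
elim: n i => [|n IH] [|i] le_in //; first by rewrite expr0 coef1.
  by rewrite exprSr coef_mul_bern addr0 mulr_gt0 ?IH.
rewrite exprSr coef_mul_bern; case: (ltnP i n) => [lt_in|le_ni].
  by rewrite addr_gt0 ?mulr_gt0 ?IH // ltnW.
by rewrite coef_bern_polyX_gt // mulr0 add0r mulr_gt0 ?IH.
Qed.

Lemma mass_lt_bern_polyX n r : mass_lt n (bern_poly r ^+ n) = 1 - r ^+ n.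
Proof.
suff total : mass_lt n.+1 (bern_poly r ^+ n) = 1.
  by rewrite -total mass_ltS coef_bern_polyX_top addrK.
elim: n => [|n IH]; first by rewrite mass_ltS mass_lt0 expr0 coef1 add0r.
by rewrite exprSr mass_lt_mul_bern mass_ltS IH coef_bern_polyX_gt // mulr0 !subr0 addr0.
Qed.

Lemma mass_lt_prod_bern_le_bern_polyX n c (f : 'I_n -> R) r :
  0 <= r -> (forall i, r <= f i <= 1) ->
  mass_lt c (\prod_(i < n) bern_poly (f i)) <= mass_lt c (bern_poly r ^+ n).
Proof.
move=> r_ge0 f_r1; rewrite bern_polyX.
have := @mass_lt_mul_prod_bern_le n c f (fun=> r) 1 coefs_ge0_1.
rewrite !mul1r; apply=> i; case/andP: (f_r1 i) => // ->.
by rewrite r_ge0.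
Qed.

Lemma coefs_ge0_mul_bern_polyX n r A :
  coefs_ge0 A -> 0 <= r <= 1 -> coefs_ge0 (A * bern_poly r ^+ n).
Proof. by move=> A_ge0 r01; rewrite bern_polyX; apply: coefs_ge0_mul_prod_bern. Qed.

Lemma mass_lt_mul_bern_polyX_le c n a r A : coefs_ge0 A ->
  0 <= a <= r -> r <= 1 -> mass_lt c (A * bern_poly r ^+ n) <= mass_lt c (A * bern_poly a ^+ n).
Proof.
move=> A_ge0 a_r r_le1; rewrite !bern_polyX.
exact: (@mass_lt_mul_prod_bern_le n c (fun=> r) (fun=> a) A A_ge0 (fun=> a_r) (fun=> r_le1)).
Qed.

Lemma mass_lt_bern_polyX_le c n a r :
  0 <= a <= r -> r <= 1 -> mass_lt c (bern_poly r ^+ n) <= mass_lt c (bern_poly a ^+ n).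
Proof.
move=> a_r r_le1; rewrite -(mul1r (bern_poly r ^+ n)) -(mul1r (bern_poly a ^+ n)).
exact: mass_lt_mul_bern_polyX_le coefs_ge0_1 a_r r_le1.
Qed.

Lemma mass_lt_bern_polyX_lt c n a r : (c < n)%N ->
  0 <= a < r -> r < 1 -> mass_lt c.+1 (bern_poly r ^+ n) < mass_lt c.+1 (bern_poly a ^+ n).
Proof.
case: n => // n lt_cn /andP[a_ge0 lt_ar] r_lt1.
have r_gt0 : 0 < r by apply: le_lt_trans lt_ar.
rewrite exprSr exprS.
apply: (@lt_le_trans _ _ (mass_lt c.+1 (bern_poly r ^+ n * bern_poly a))).
  by apply: mass_lt_mul_bern_lt => //; rewrite coef_bern_polyX_gt0 ?r_gt0.
rewrite mulrC; apply: mass_lt_mul_bern_polyX_le; rewrite ?a_ge0 ?ltW //.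
rewrite -[bern_poly a]mul1r; apply: coefs_ge0_mul_bern coefs_ge0_1 _.
by rewrite a_ge0 ltW ?(lt_trans lt_ar).
Qed.

(* A_(k+1) / A_k is at most the corresponding ratio for Bin(m, p),
   cleared of denominators. *)
Definition binomial_ratio_le (m : nat) p A := forall k : nat,
  k.+1%:R * (1 - p) * A`_k.+1 <= (m%:R - k%:R) * p * A`_k.

Lemma binomial_ratio_le1 p : binomial_ratio_le 0 p 1.
Proof. by case=> [|k]; rewrite !coef1 /= !mulr0 ?subrr ?mul0r. Qed.

Lemma binomial_ratio_le_mul_bern m p s A :
  binomial_ratio_le m p A -> coefs_ge0 A -> 0 <= s <= p -> p <= 1 ->
  binomial_ratio_le m.+1 p (A * bern_poly s).
Proof.
move=> ratioA A_ge0 /andP[s_ge0 le_sp] p_le1 k.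
have s'_ge0 : 0 <= 1 - s by rewrite subr_ge0 (le_trans le_sp).
have gap : 0 <= (p - s) * A`_k by rewrite mulr_ge0 ?subr_ge0.
have ratio_k := ler_wpM2l s'_ge0 (ratioA k).
rewrite !coef_mul_bern -!natr1 in ratio_k *.
case: k ratio_k gap => [|k] ratio_k gap; first by rewrite !addr0; nra.
have ratio_k' := ler_wpM2l s_ge0 (ratioA k).
rewrite -!natr1 in ratio_k'; nra.
Qed.

Lemma binomial_ratio_le_mul_bern_polyX m n p s A :
  binomial_ratio_le m p A -> coefs_ge0 A -> 0 <= s <= p -> p <= 1 ->
  binomial_ratio_le (m + n) p (A * bern_poly s ^+ n).
Proof.
move=> ratioA A_ge0 s_p p_le1.
have s01 : 0 <= s <= 1 by case/andP: s_p => -> /le_trans; apply.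
elim: n => [|n IH]; first by rewrite addn0 expr0 mulr1.
rewrite addnS exprSr mulrA; apply: binomial_ratio_le_mul_bern => //.
exact: coefs_ge0_mul_bern_polyX.
Qed.

Lemma binomial_ratio_le_bern_polyXX m n p p' : 0 <= p' <= p -> p < 1 ->
  binomial_ratio_le (m + n) p (bern_poly p ^+ m * bern_poly p' ^+ n).
Proof.
move=> p'_p p_lt1; have p_ge0 : 0 <= p by case/andP: p'_p => /le_trans; apply.
rewrite -[m]add0n -[bern_poly p ^+ m]mul1r.
apply: binomial_ratio_le_mul_bern_polyX; rewrite ?(ltW p_lt1) //.
  by apply: binomial_ratio_le_mul_bern_polyX (binomial_ratio_le1 p) coefs_ge0_1 _ _;
    rewrite ?p_ge0 ?lexx ?ltW.
by apply: coefs_ge0_mul_bern_polyX coefs_ge0_1 _; rewrite p_ge0 ltW.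
Qed.

Lemma coef_succ_le_binomial_ratio m k p W : binomial_ratio_le m p W ->
  k.+1%:R * (1 - p) = (m%:R - k%:R) * p -> 0 < (m%:R - k%:R) * p ->
  W`_k.+1 <= W`_k.
Proof. by move=> ratioW mode pos; have := ratioW k; rewrite mode ler_pM2l. Qed.

Lemma mass_lt_spread j W p p' s : W`_j.+1 <= W`_j -> 0 <= s <= p' -> p' <= p ->
  mass_lt j.+2 (W * bern_poly p' * bern_poly (s + (p - p'))) <=
  mass_lt j.+2 (W * bern_poly p * bern_poly s).
Proof.
move=> le_W /andP[s_ge0 le_sp'] le_p'p.
rewrite !mass_lt_mul_bern !coef_mul_bern.
(* The difference of the two sides is exactly this product. *)
have : 0 <= (p - p') * (p' - s) * (W`_j - W`_j.+1) by rewrite !mulr_ge0 ?subr_ge0.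
nra.
Qed.

Lemma mass_lt_bern_polyX_mean_succ_le j n : (0 < j < n)%N ->
  mass_lt j.+1 (bern_poly (j%:R / n.+1%:R) ^+ n.+1) <=
  mass_lt j.+1 (bern_poly (j%:R / n%:R) ^+ n).
Proof.
case: j => [|j] // /andP[_ lt_jn].
have n_gt0 : (0 < n)%N by apply: leq_trans lt_jn.
set p := j.+1%:R / n%:R; set p' := j.+1%:R / n.+1%:R; set d := p - p'.
have n_neq0 : n%:R != 0 :> R by rewrite pnatr_eq0 -lt0n.
have n1_neq0 : n.+1%:R != 0 :> R by rewrite pnatr_eq0.
have n_d : n%:R * d = p'.
  by rewrite /d /p /p' -natr1; field; rewrite n_neq0 addrC natr1 n1_neq0.
have p'_ge0 : 0 <= p' by rewrite divr_ge0 ?ler0n.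
have p_gt0 : 0 < p by rewrite divr_gt0 ?ltr0n.
have d_ge0 : 0 <= d by rewrite -(pmulr_rge0 _ (ltr0Sn R n.-1)) prednK // n_d.
have le_p'p : p' <= p by rewrite -subr_ge0.
have p_lt1 : p < 1 by rewrite ltr_pdivrMr ?ltr0n // mul1r ltr_nat.
(* Q k trades k factors Bernoulli(p) for Bernoulli(p') and keeps the mean with
   one factor Bernoulli(k (p - p')); Q 0 and Q n are the two binomials. *)
pose Q k := bern_poly p ^+ (n - k) * bern_poly p' ^+ k * bern_poly (k%:R * d).
suff Q_le k : (k <= n)%N -> mass_lt j.+2 (Q k) <= mass_lt j.+2 (Q 0).
  move: (Q_le n (leqnn n)).
  by rewrite /Q subnn subn0 mul0r bern_poly0 n_d !mulr1 mul1r exprSr.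
elim: k => // k IH lt_kn; apply: le_trans (IH (ltnW lt_kn)).
set W := bern_poly p ^+ (n - k.+1) * bern_poly p' ^+ k.
have -> : Q k = W * bern_poly p * bern_poly (k%:R * d).
  by rewrite /Q /W -(subnSK lt_kn) exprSr -(mulrA _ (bern_poly p)) [bern_poly p * _]mulrC mulrA.
have -> : Q k.+1 = W * bern_poly p' * bern_poly (k%:R * d + (p - p')).
  by rewrite /Q /W exprSr mulrA -natr1 mulrDl mul1r.
apply: mass_lt_spread => //.
  have ratioW : binomial_ratio_le n.-1 p W.
    have -> : n.-1 = (n - k.+1 + k)%N by lia.
    by apply: binomial_ratio_le_bern_polyXX; rewrite ?p'_ge0.
  have n1 : n.-1%:R = n%:R - 1 :> R by rewrite -[in RHS](prednK n_gt0) -natr1 addrK.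
  apply: coef_succ_le_binomial_ratio ratioW _ _.
    by rewrite n1 /p -natr1; field.
  by rewrite mulr_gt0 // n1 -addrA -opprD subr_gt0 addrC natr1 ltr_nat.
by rewrite mulr_ge0 ?ler0n //= -n_d ler_wpM2r // ler_nat ltnW.
Qed.

Lemma mass_lt_bern_polyX_mean_le j n : (0 < j < n)%N ->
  mass_lt j.+1 (bern_poly (j%:R / n%:R) ^+ n) <= 1 - (j%:R / j.+1%:R) ^+ j.+1.
Proof.
case/andP=> j_gt0; elim: n => // n IH; rewrite ltnS leq_eqVlt => /orP[/eqP<-|lt_jn].
  by rewrite mass_lt_bern_polyX.
by apply: le_trans (IH lt_jn); apply: mass_lt_bern_polyX_mean_succ_le; rewrite j_gt0.
Qed.

Lemma quarter_le_expr_ratio j : (0 < j)%N -> 4^-1 <= (j%:R / j.+1%:R) ^+ j.+1 :> R.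
Proof.
move=> j_gt0; have := expn_succ_ratio_le (m := 1) (n := j); rewrite j_gt0 => /(_ isT).
rewrite -(ler_nat R) !natrM !natrX expr_div_n ler_pdivlMr ?exprn_gt0 ?ltr0n //.
lra.
Qed.

Lemma quarter_lt_expr_ratio j : (1 < j)%N -> 4^-1 < (j%:R / j.+1%:R) ^+ j.+1 :> R.
Proof.
move=> j_gt1; have := expn_succ_ratio_le (m := 2) (n := j); rewrite j_gt1 => /(_ isT).
rewrite -(ler_nat R) !natrM !natrX expr_div_n ltr_pdivlMr ?exprn_gt0 ?ltr0n //.
have : 0 < j%:R ^+ j.+1 :> R by rewrite exprn_gt0 // ltr0n ltnW.
lra.
Qed.

Lemma binomial_mass_lt_floor_lt N j r : (0 < j < N)%N ->
  j%:R <= N%:R * r -> 1 < N%:R * r -> r < 1 ->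
  mass_lt j.+1 (bern_poly r ^+ N) < 1 - 4^-1.
Proof.
move=> jN le_jx x_gt1 r_lt1; case/andP: (jN) => j_gt0 lt_jN.
have N_gt0 : 0 < N%:R :> R by rewrite ltr0n (leq_trans j_gt0 (ltnW lt_jN)).
have a_ge0 : 0 <= j%:R / N%:R :> R by rewrite divr_ge0 ?ler0n.
have mean_le := mass_lt_bern_polyX_mean_le jN.
case: (ltnP 1 j) => [j_gt1|j_le1].
  apply: le_lt_trans (le_trans _ mean_le) _; last first.
    by rewrite ltrD2l ltrN2 quarter_lt_expr_ratio.
  by apply: mass_lt_bern_polyX_le (ltW r_lt1); rewrite a_ge0 ler_pdivrMr // mulrC.
(* Here (j/(j+1))^(j+1) = 1/4, so strictness must come from j/N < r. *)
have {j_le1} j1 : j = 1%N by apply/eqP; rewrite eqn_leq j_le1.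
apply: lt_le_trans (mass_lt_bern_polyX_lt lt_jN _ r_lt1) (le_trans mean_le _).
  by rewrite a_ge0 ltr_pdivrMr // mulrC j1.
by rewrite lerD2l lerN2 quarter_le_expr_ratio.
Qed.

End BernoulliPolynomials.

Section BernoulliProducts.
Variables (R : realFieldType) (N : nat) (q : 'I_N -> R).
Implicit Types (b : {ffun 'I_N -> bool}) (x : R).

Definition bern_zeros b : nat := \sum_(i < N) (~~ b i : nat).

Lemma bern_sum_add_zeros b : (bern_sum b + bern_zeros b)%N = N.
Proof.
rewrite /bern_sum /bern_zeros -big_split /= -[RHS]card_ord -sum1_card.
by apply: eq_bigr => i _; case: (b i).
Qed.

Lemma sum_bern_weight : \sum_b bern_weight q b = 1.
Proof.
rewrite /bern_weight -(bigA_distr_bigA (fun i (x : bool) => if x then q i else 1 - q i)).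
by rewrite big1 // => i _; rewrite big_bool /= addrC subrK.
Qed.

Lemma bern_probN (A : pred {ffun 'I_N -> bool}) :
  bern_prob q (fun b => ~~ A b) = 1 - bern_prob q A.
Proof. by rewrite -sum_bern_weight (bigID A) /= addrC addrK. Qed.

Lemma prod_bern_poly_compl :
  \prod_(i < N) bern_poly (1 - q i) = \sum_b (bern_weight q b)%:P * 'X^(bern_zeros b).
Proof.
have -> : \prod_(i < N) bern_poly (1 - q i) =
    \prod_(i < N) \sum_(x : bool) (if x then q i else 1 - q i)%:P * 'X^(~~ x).
  by apply: eq_bigr => i _; rewrite big_bool /bern_poly /= expr1 expr0 mulr1 subKr.
rewrite bigA_distr_bigA; apply: eq_bigr => b _.
by rewrite big_split /= -rmorph_prod prodrXr.
Qed.

Lemma bern_prob_zeros_lt c :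
  bern_prob q (fun b => (bern_zeros b < c)%N) = mass_lt c (\prod_(i < N) bern_poly (1 - q i)).
Proof.
rewrite prod_bern_poly_compl mass_lt_sum /bern_prob big_mkcond /=.
by apply: eq_bigr => b _; rewrite mass_lt_CXn.
Qed.

Lemma exists_nat_floor n x : 0 <= x -> x < n%:R -> exists j : nat, j%:R <= x < j.+1%:R.
Proof.
elim: n => [|n IH] x_ge0 lt_xn; first by move: (le_lt_trans x_ge0 lt_xn); rewrite ltxx.
by case: (lerP n%:R x) => [le_nx|]; [exists n; rewrite le_nx | exact: IH].
Qed.

Lemma bern_sum_lt_sub_floor j x b : j%:R <= x < j.+1%:R ->
  ((bern_sum b)%:R < N%:R - x :> R) = (j < bern_zeros b)%N.
Proof.
case/andP=> le_jx lt_xj.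
have -> : N%:R = (bern_sum b)%:R + (bern_zeros b)%:R :> R by rewrite -natrD bern_sum_add_zeros.
rewrite -addrA ltrDl subr_gt0.
apply/idP/idP => [lt_xz|lt_jz]; first by rewrite -(ltr_nat R) (le_lt_trans le_jx).
by rewrite (lt_le_trans lt_xj) // ler_nat.
Qed.

End BernoulliProducts.

Theorem corollary1 (R : realFieldType) (N : nat) (q : 'I_N -> R) :
  (0 < N)%N ->
  (forall i, 0 < q i < 1) ->
  qmax q < 1 - N%:R^-1 ->
  bern_prob q (fun b => (bern_sum b)%:R < N%:R * qmax q) > 4^-1.
Proof.
move=> N_gt0 q01 p_lt; set p := qmax q in p_lt *.
have le_qp i : q i <= p by apply: le_bigmax.
have p_gt0 : 0 < p by case/andP: (q01 (Ordinal N_gt0)) => /lt_le_trans->.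
have N_pos : 0 < N%:R :> R by rewrite ltr0n.
have p_lt1 : p < 1 by rewrite (lt_le_trans p_lt) // gerBl invr_ge0 ler0n.
have x_gt1 : 1 < N%:R * (1 - p).
  by rewrite -[X in X < _](mulfV (lt0r_neq0 N_pos)) ltr_pM2l //; lra.
have x_ltN : N%:R * (1 - p) < N%:R by rewrite gtr_pMr //; lra.
have [j /andP[le_jx lt_xj]] := exists_nat_floor (ltW (lt_trans ltr01 x_gt1)) x_ltN.
have jN : (0 < j < N)%N.
  by rewrite -ltnS -!(ltr_nat R) (lt_trans x_gt1) ?(le_lt_trans le_jx).
have -> : bern_prob q (fun b => (bern_sum b)%:R < N%:R * p) =
          bern_prob q (fun b => ~~ (bern_zeros b < j.+1)%N).
  apply: eq_bigl => b; rewrite -leqNgt -(bern_sum_lt_sub_floor _ (x := N%:R * (1 - p))) ?le_jx //.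
  by congr (_ < _); ring.
rewrite bern_probN bern_prob_zeros_lt.
have dom : mass_lt j.+1 (\prod_(i < N) bern_poly (1 - q i)) <= mass_lt j.+1 (bern_poly (1 - p) ^+ N).
  apply: mass_lt_prod_bern_le_bern_polyX => [|i]; first by rewrite subr_ge0 ltW.
  by have := le_qp i; case/andP: (q01 i); lra.
have r_lt1 : 1 - p < 1 by rewrite gtrBl.
have := binomial_mass_lt_floor_lt jN le_jx x_gt1 r_lt1.
lra.
Qed.
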